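(* Let $(S,\mathcal{S})$ be a measurable space, let ${\sf F}\subseteq\mathcal{P}(S)$, and let $\mathcal{E}$ be a $\cap$-stable collection with $\sigma(\mathcal{E})=\mathcal{S}$. If there exist $E_n\in\mathcal{E}\cap {\sf F}$, $n\in\mathbb{N}$, with $S=\bigcup_{n\in\mathbb{N}}E_{n}$, then $\{N^{\sf F}_{E}\mid E\in\mathcal{E}\}$ generates $\mathcal{C}^{\sf F}(\mathcal{S})$, i.e. $\sigma(N^{\sf F}_E\mid E\in\mathcal{E})=\mathcal{C}^{\sf F}(\mathcal{S})$.
   Context: $C(S)$ is the set of countable subsets of $S$. $C^{\sf F}(S)=\{M\in C(S)\mid |M\cap A|<\infty \text{ for all } A\in{\sf F}\}$. For $A\subseteq S$, $N^{\sf F}_A:C^{\sf F}(S)\to\mathbb{N}_0\cup\{\infty\}$, $M\mapsto|M\cap A|$. For nonempty $\mathcal{T}\subseteq\mathcal{P}(S)$, $\mathcal{C}^{\sf F}(\mathcal{T})=\sigma(N^{\sf F}_A\mid A\in\mathcal{T})$, a $\sigma$-field on $C^{\sf F}(S)$. *)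

From Stdlib Require Import List Classical ClassicalEpsilon.
Import ListNotations.
Set Implicit Arguments.

Definition is_sigma_field {X : Type} (Sig : (X -> Prop) -> Prop) : Prop :=
  Sig (fun _ => True) /\
  (forall A, Sig A -> Sig (fun x => ~ A x)) /\
  (forall A : nat -> X -> Prop, (forall n, Sig (A n)) -> Sig (fun x => exists n, A n x)).

Definition sigma_gen {X : Type} (G : (X -> Prop) -> Prop) : (X -> Prop) -> Prop :=
  fun A => forall Sig, is_sigma_field Sig -> (forall B, G B -> Sig B) -> Sig A.

Definition cap_stable {X : Type} (E : (X -> Prop) -> Prop) : Prop :=
  forall A B, E A -> E B -> E (fun x => A x /\ B x).

Definition countable_set {S : Type} (M : S -> Prop) : Prop :=
  exists f : S -> nat, forall x y, M x -> M y -> f x = f y -> x = y.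

Definition finite_set {S : Type} (M : S -> Prop) : Prop :=
  exists l : list S, forall x, M x -> In x l.

Definition CF {S : Type} (F : (S -> Prop) -> Prop) : Type :=
  { M : S -> Prop | countable_set M /\ forall A, F A -> finite_set (fun x => M x /\ A x) }.

(* Cardinality in N_0 cup {oo}: Some n = n, None = infinity. *)
Definition card_is {S : Type} (P : S -> Prop) (k : option nat) : Prop :=
  match k with
  | Some n => exists l : list S, NoDup l /\ (forall x, In x l <-> P x) /\ length l = n
  | None => ~ finite_set P
  end.

Lemma card_exists {S : Type} (P : S -> Prop) : exists k, card_is P k.
Proof.
  destruct (classic (finite_set P)) as [[l Hl]|Hn].
  -
    assert (H : forall l0 : list S, exists l' : list S, NoDup l' /\
              (forall x, In x l' <-> (In x l0 /\ P x))).
    { induction l0 as [|a l0 IH].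
      - exists []. split; [constructor|]. simpl. tauto.
      - destruct IH as [l' [Hnd Hin]].
        destruct (classic (P a /\ ~ In a l')) as [[Pa Na]|Hc].
        + exists (a :: l'). split; [constructor; auto|].
          intros x; simpl; rewrite Hin. split.
          * intros [<-|[? ?]]; tauto.
          * intros [[<-|?] ?]; tauto.
        + exists l'. split; auto. intros x; rewrite Hin; simpl. split.
          * tauto.
          * intros [[<-|?] ?]; [|tauto].
            apply NNPP; intro Hx. apply Hc. split; auto. rewrite Hin. tauto. }
    destruct (H l) as [l' [Hnd Hin]].
    exists (Some (length l')). exists l'. repeat split; auto.
    + intros Hx. apply Hin in Hx. tauto.
    + intros Hx. apply Hin. auto.
  - exists None. exact Hn.
Qed.

Definition ncard {S : Type} (P : S -> Prop) : option nat :=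
  proj1_sig (constructive_indefinite_description _ (card_exists P)).

Definition N_F {S : Type} (F : (S -> Prop) -> Prop) (A : S -> Prop) (M : CF F) : option nat :=
  ncard (fun x => proj1_sig M x /\ A x).

(* sigma(N^F_A | A in T): generated by the preimages N_A^{-1}(B),
   B any subset of N_0 cup {oo} (discrete sigma-field). *)
Definition CF_sigma {S : Type} (F : (S -> Prop) -> Prop) (T : (S -> Prop) -> Prop)
  : (CF F -> Prop) -> Prop :=
  sigma_gen (fun Z => exists (A : S -> Prop) (B : option nat -> Prop),
                T A /\ forall M, Z M <-> B (@N_F S F A M)).

From Stdlib Require Import List Classical FunctionalExtensionality PropExtensionality Lia.
Import ListNotations.

(* One inclusion is immediate since E ⊆ SS.  For the other we show that every
   N^F_A with A ∈ SS is measurable for σ(N^F_E | E ∈ E):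
   - for a fixed C ∈ E ∩ F the sets A with N^F_{A∩C} measurable form a Dynkin
     system (counts inside C are finite, so they subtract), which contains the
     ∩-stable E; by the π-λ theorem it contains σ(E) = SS;
   - A ∩ (E_0 ∪ … ∪ E_{m-1}) is a finite disjoint union of such traces, so its
     count is a sum of measurable counts;
   - N^F_A is the eventual value of these counts as m grows. *)

Lemma set_ext {X : Type} (A B : X -> Prop) : (forall x, A x <-> B x) -> A = B.
Proof.
  intro H. apply functional_extensionality; intro x.
  apply propositional_extensionality, H.
Qed.

Lemma sig_eq {X : Type} (Sig : (X -> Prop) -> Prop) (A B : X -> Prop) :
  Sig A -> (forall x, A x <-> B x) -> Sig B.
Proof. intros HA H. rewrite <- (set_ext _ _ H). exact HA. Qed.

Section SigmaFieldClosure.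
Context {X : Type} (Sig : (X -> Prop) -> Prop) (HSig : is_sigma_field Sig).

Lemma sig_full : Sig (fun _ => True).
Proof. apply HSig. Qed.

Lemma sig_compl (A : X -> Prop) : Sig A -> Sig (fun x => ~ A x).
Proof. apply HSig. Qed.

Lemma sig_union (A : nat -> X -> Prop) :
  (forall n, Sig (A n)) -> Sig (fun x => exists n, A n x).
Proof. apply HSig. Qed.

Lemma sig_empty : Sig (fun _ => False).
Proof. apply (sig_eq _ _ _ (sig_compl _ sig_full)). tauto. Qed.

Lemma sig_and_const (P : Prop) (A : X -> Prop) : Sig A -> Sig (fun x => P /\ A x).
Proof.
  intro HA. destruct (classic P) as [p | np].
  - apply (sig_eq _ _ _ HA). tauto.
  - apply (sig_eq _ _ _ sig_empty). tauto.
Qed.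

Lemma sig_forall (A : nat -> X -> Prop) :
  (forall n, Sig (A n)) -> Sig (fun x => forall n, A n x).
Proof.
  intro HA.
  apply (sig_eq _ _ _ (sig_compl _ (sig_union (fun n x => ~ A n x)
                                      (fun n => sig_compl _ (HA n))))).
  intro x. split.
  - intros Hn n. apply NNPP. intro Hc. apply Hn. now exists n.
  - intros Ha [n Hn]. exact (Hn (Ha n)).
Qed.

Lemma sig_inter (A B : X -> Prop) : Sig A -> Sig B -> Sig (fun x => A x /\ B x).
Proof.
  intros HA HB.
  apply (sig_eq _ _ _ (sig_forall (fun n x => match n with 0 => A x | _ => B x end)
                         (fun n => match n with 0 => HA | _ => HB end))).
  intro x. split.
  - intro H. exact (conj (H 0) (H 1)).
  - intros [Ax Bx] [|n]; assumption.
Qed.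
End SigmaFieldClosure.

Lemma sigma_gen_sigma_field {X : Type} (G : (X -> Prop) -> Prop) :
  is_sigma_field (sigma_gen G).
Proof.
  split; [|split].
  - intros Sig HS _. apply HS.
  - intros A HA Sig HS HG. apply HS, HA; assumption.
  - intros A HA Sig HS HG. apply HS. intro n. apply HA; assumption.
Qed.

Lemma sigma_gen_base {X : Type} (G : (X -> Prop) -> Prop) (A : X -> Prop) :
  G A -> sigma_gen G A.
Proof. intros HA Sig _ HG. exact (HG A HA). Qed.

Lemma sigma_gen_mono {X : Type} (G1 G2 : (X -> Prop) -> Prop) :
  (forall A, G1 A -> G2 A) -> forall A, sigma_gen G1 A -> sigma_gen G2 A.
Proof.
  intros H12 A HA Sig HS HG2. apply HA; [exact HS |].
  intros B HB. exact (HG2 B (H12 B HB)).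
Qed.

Definition measurable_onat {X : Type} (Sig : (X -> Prop) -> Prop)
  (f : X -> option nat) : Prop :=
  forall B : option nat -> Prop, Sig (fun x => B (f x)).

Definition onat_of_nat (n : nat) : option nat :=
  match n with 0 => None | S k => Some k end.

Lemma onat_of_nat_surj (v : option nat) : exists n, onat_of_nat n = v.
Proof. destruct v as [k |]; [exists (S k) | exists 0]; reflexivity. Qed.

Section MeasurableOnat.
Context {X : Type} (Sig : (X -> Prop) -> Prop) (HSig : is_sigma_field Sig).

(* As option nat is countable, measurable level sets suffice. *)
Lemma measurable_levels (f : X -> option nat) :
  (forall v, Sig (fun x => f x = v)) -> measurable_onat Sig f.
Proof.
  intros Hlev B.
  apply (sig_eq _ _ _ (sig_union Sig HSig
           (fun n x => B (onat_of_nat n) /\ f x = onat_of_nat n)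
           (fun n => sig_and_const Sig HSig _ _ (Hlev _)))).
  intro x. split.
  - intros [n [Hb ->]]. exact Hb.
  - intro Hb. destruct (onat_of_nat_surj (f x)) as [n Hn].
    exists n. rewrite Hn. auto.
Qed.

(* The level ∞ is the complement of the finite levels. *)
Lemma measurable_finite_levels (f : X -> option nat) :
  (forall k, Sig (fun x => f x = Some k)) -> measurable_onat Sig f.
Proof.
  intro Hfin. apply measurable_levels. intros [k |]; [apply Hfin |].
  apply (sig_eq _ _ _ (sig_compl Sig HSig _ (sig_union Sig HSig _ Hfin))).
  intro x. destruct (f x) as [k |]; split.
  - intro H. exfalso. apply H. now exists k.
  - discriminate.
  - reflexivity.
  - intros _ [k Hk]. discriminate.
Qed.

Lemma measurable_combine (h : option nat -> option nat -> option nat)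
  (f g : X -> option nat) :
  measurable_onat Sig f -> measurable_onat Sig g ->
  measurable_onat Sig (fun x => h (f x) (g x)).
Proof.
  intros Hf Hg B.
  set (piece i j x := B (h (onat_of_nat i) (onat_of_nat j)) /\
                      (f x = onat_of_nat i /\ g x = onat_of_nat j)).
  assert (Hpiece : forall i j, Sig (piece i j)).
  { intros i j. apply sig_and_const; [exact HSig |].
    apply sig_inter; [exact HSig | apply (Hf (fun v => v = _)) | apply (Hg (fun v => v = _))]. }
  apply (sig_eq _ _ _ (sig_union Sig HSig (fun i x => exists j, piece i j x)
                         (fun i => sig_union Sig HSig _ (Hpiece i)))).
  intro x. split.
  - intros [i [j [Hb [-> ->]]]]. exact Hb.
  - intro Hb. destruct (onat_of_nat_surj (f x)) as [i Hi].
    destruct (onat_of_nat_surj (g x)) as [j Hj].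
    exists i, j. unfold piece. rewrite Hi, Hj. auto.
Qed.

Lemma measurable_eventual (f : nat -> X -> option nat) (g : X -> option nat) :
  (forall m, measurable_onat Sig (f m)) ->
  (forall x k, g x = Some k <-> exists m, forall i, f (m + i) x = Some k) ->
  measurable_onat Sig g.
Proof.
  intros Hf Hg. apply measurable_finite_levels. intro k.
  apply (sig_eq _ _ _ (sig_union Sig HSig _ (fun m =>
           sig_forall Sig HSig _ (fun i => Hf (m + i) (fun v => v = Some k))))).
  intro x. symmetry. apply Hg.
Qed.

Lemma measurable_const (c : option nat) : measurable_onat Sig (fun _ => c).
Proof.
  intro B. apply (sig_eq _ _ _ (sig_and_const Sig HSig (B c) _ (sig_full Sig HSig))).
  tauto.
Qed.
End MeasurableOnat.
Lemma finite_subset {T : Type} (P Q : T -> Prop) :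
  (forall x, Q x -> P x) -> finite_set P -> finite_set Q.
Proof. intros HQP [l Hl]. exists l. auto. Qed.

Lemma card_is_unique {T : Type} (P : T -> Prop) (a b : option nat) :
  card_is P a -> card_is P b -> a = b.
Proof.
  destruct a as [n |], b as [m |]; simpl.
  - intros [l1 [N1 [I1 <-]]] [l2 [N2 [I2 <-]]]. f_equal.
    assert (length l1 <= length l2) by (apply NoDup_incl_length; auto; intros x Hx; apply I2, I1, Hx).
    assert (length l2 <= length l1) by (apply NoDup_incl_length; auto; intros x Hx; apply I1, I2, Hx).
    lia.
  - intros [l [_ [I _]]] Hinf. exfalso. apply Hinf. exists l. apply I.
  - intros Hinf [l [_ [I _]]]. exfalso. apply Hinf. exists l. apply I.
  - reflexivity.
Qed.

Lemma ncard_spec {T : Type} (P : T -> Prop) : card_is P (ncard P).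
Proof. exact (proj2_sig _). Qed.

Lemma ncard_eq {T : Type} (P : T -> Prop) (k : option nat) :
  card_is P k -> ncard P = k.
Proof. apply card_is_unique, ncard_spec. Qed.

Lemma ncard_ext {T : Type} (P Q : T -> Prop) :
  (forall x, P x <-> Q x) -> ncard P = ncard Q.
Proof. intro H. now rewrite (set_ext _ _ H). Qed.

Lemma ncard_finite {T : Type} (P : T -> Prop) :
  finite_set P -> exists k, ncard P = Some k.
Proof.
  intro Hfin. pose proof (ncard_spec P) as Hc.
  destruct (ncard P) as [k |]; [now exists k | contradiction].
Qed.

Lemma ncard_some_finite {T : Type} (P : T -> Prop) (k : nat) :
  ncard P = Some k -> finite_set P.
Proof.
  intro Hk. pose proof (ncard_spec P) as Hc. rewrite Hk in Hc.
  destruct Hc as [l [_ [I _]]]. exists l. apply I.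
Qed.

Lemma ncard_zero {T : Type} (P : T -> Prop) (x : T) : ncard P = Some 0 -> ~ P x.
Proof.
  intros H0 Px. pose proof (ncard_spec P) as Hc. rewrite H0 in Hc.
  destruct Hc as [[| y l] [_ [I Hlen]]]; [exact (proj2 (I x) Px) | discriminate].
Qed.

(* Addition and truncated subtraction on N_0 ∪ {∞}, ∞ being absorbing. *)
Definition oadd (a b : option nat) : option nat :=
  match a, b with Some m, Some n => Some (m + n) | _, _ => None end.

Definition osub (a b : option nat) : option nat :=
  match a, b with Some m, Some n => Some (m - n) | _, _ => None end.

Lemma ncard_disjoint_union {T : Type} (P Q : T -> Prop) :
  (forall x, P x -> Q x -> False) ->
  ncard (fun x => P x \/ Q x) = oadd (ncard P) (ncard Q).
Proof.
  intro Hdisj.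
  destruct (classic (finite_set P /\ finite_set Q)) as [[HP HQ] | Hinf].
  - destruct (ncard_finite P HP) as [p Hp], (ncard_finite Q HQ) as [q Hq].
    pose proof (ncard_spec P) as Hcp. pose proof (ncard_spec Q) as Hcq.
    rewrite Hp in Hcp |- *. rewrite Hq in Hcq |- *.
    destruct Hcp as [l1 [N1 [I1 L1]]], Hcq as [l2 [N2 [I2 L2]]].
    apply ncard_eq. exists (l1 ++ l2). split; [| split].
    + apply NoDup_app; auto. intros x H1 H2. exact (Hdisj x (proj1 (I1 x) H1) (proj1 (I2 x) H2)).
    + intro x. rewrite in_app_iff, I1, I2. tauto.
    + rewrite length_app. lia.
  - assert (Hunion : ~ finite_set (fun x => P x \/ Q x)).
    { intro Hfin. apply Hinf.
      split; apply (finite_subset (fun x => P x \/ Q x)); auto; simpl; tauto. }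
    rewrite (ncard_eq _ None Hunion).
    destruct (classic (finite_set P)) as [HP | HP].
    + assert (HQ : ~ finite_set Q) by tauto.
      rewrite (ncard_eq _ None HQ). now destruct (ncard P).
    + now rewrite (ncard_eq _ None HP).
Qed.

Lemma ncard_diff {T : Type} (P Q : T -> Prop) :
  (forall x, Q x -> P x) -> finite_set P ->
  ncard (fun x => P x /\ ~ Q x) = osub (ncard P) (ncard Q).
Proof.
  intros HQP HP.
  assert (Hsplit : ncard P = oadd (ncard Q) (ncard (fun x => P x /\ ~ Q x))).
  { rewrite <- ncard_disjoint_union by tauto. apply ncard_ext.
    intro x. specialize (HQP x). destruct (classic (Q x)); tauto. }
  destruct (ncard_finite Q) as [q Hq]; [exact (finite_subset _ _ HQP HP) |].
  destruct (ncard_finite (fun x => P x /\ ~ Q x)) as [c Hc].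
  { eapply finite_subset; [| exact HP]. simpl; tauto. }
  rewrite Hsplit, Hq, Hc. simpl. f_equal. lia.
Qed.

Lemma ncard_subset_eq {T : Type} (P Q : T -> Prop) (k : nat) :
  (forall x, Q x -> P x) -> ncard Q = Some k -> ncard P = Some k ->
  forall x, P x -> Q x.
Proof.
  intros HQP HQ HP x Px.
  assert (Hempty : ncard (fun y => P y /\ ~ Q y) = Some 0).
  { rewrite ncard_diff, HP, HQ by (eauto using ncard_some_finite).
    simpl. f_equal. lia. }
  apply NNPP. intro nQx. exact (ncard_zero _ x Hempty (conj Px nQx)).
Qed.

Definition increasing {T : Type} (P : nat -> T -> Prop) : Prop :=
  forall m x, P m x -> P (S m) x.

Lemma increasing_le {T : Type} (P : nat -> T -> Prop) :
  increasing P -> forall m m' x, m <= m' -> P m x -> P m' x.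
Proof. intros Hinc m m' x Hle. induction Hle; auto. Qed.

Lemma increasing_list {T : Type} (P : nat -> T -> Prop) :
  increasing P -> forall l : list T,
  (forall x, In x l -> exists m, P m x) -> exists m, forall x, In x l -> P m x.
Proof.
  intros Hinc l. induction l as [| a l IH]; intro Hl.
  - exists 0. intros x [].
  - destruct (Hl a (or_introl eq_refl)) as [m1 H1].
    destruct IH as [m2 H2]; [intros x Hx; apply Hl; now right |].
    exists (Nat.max m1 m2). intros x [<- | Hx].
    + apply (increasing_le P Hinc m1); [lia | exact H1].
    + apply (increasing_le P Hinc m2); [lia | exact (H2 x Hx)].
Qed.

Lemma ncard_increasing_union {T : Type} (P : nat -> T -> Prop) (k : nat) :
  increasing P ->
  ncard (fun x => exists m, P m x) = Some k <->
  exists m, forall i, ncard (P (m + i)) = Some k.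
Proof.
  intro Hinc. split.
  - intro Hk. pose proof (ncard_spec (fun x => exists m, P m x)) as Hc.
    rewrite Hk in Hc. destruct Hc as [l [_ [Hl _]]].
    destruct (increasing_list P Hinc l) as [m Hm]; [intros x Hx; apply Hl, Hx |].
    exists m. intro i. rewrite <- Hk. apply ncard_ext. intro x. split.
    + intro Hx. eauto.
    + intro Hx. apply (increasing_le P Hinc m); [lia | exact (Hm x (proj2 (Hl x) Hx))].
  - intros [m Hm]. rewrite <- (Hm 0). apply ncard_ext. intro x. split.
    + intros [j Hj]. apply (ncard_subset_eq (P (m + j)) (P (m + 0)) k).
      * intro y. apply increasing_le; [exact Hinc | lia].
      * apply Hm.
      * apply Hm.
      * apply (increasing_le P Hinc j); [lia | exact Hj].
    + intro Hx. eauto.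
Qed.

Definition is_dynkin {X : Type} (D : (X -> Prop) -> Prop) : Prop :=
  D (fun _ => True) /\
  (forall A B, D A -> D B -> (forall x, B x -> A x) -> D (fun x => A x /\ ~ B x)) /\
  (forall A : nat -> X -> Prop, (forall n, D (A n)) -> increasing A ->
     D (fun x => exists n, A n x)).

Lemma dynkin_cap_sigma_field {X : Type} (D : (X -> Prop) -> Prop) :
  is_dynkin D -> (forall A B, D A -> D B -> D (fun x => A x /\ B x)) ->
  is_sigma_field D.
Proof.
  intros [Dfull [Ddiff Dincr]] Dcap.
  assert (Dcompl : forall A, D A -> D (fun x => ~ A x)).
  { intros A HA. apply (sig_eq _ _ _ (Ddiff _ _ Dfull HA (fun _ _ => I))). tauto. }
  assert (Dcup : forall A B, D A -> D B -> D (fun x => A x \/ B x)).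
  { intros A B HA HB.
    apply (sig_eq _ _ _ (Dcompl _ (Dcap _ _ (Dcompl _ HA) (Dcompl _ HB)))).
    intro x. destruct (classic (A x)); tauto. }
  split; [exact Dfull | split; [exact Dcompl |]].
  intros A HA.
  (* the finite partial unions are in D and increase to the countable union *)
  set (U m x := exists i, i <= m /\ A i x).
  assert (HU : forall m, D (U m)).
  { induction m as [| m IH].
    - apply (sig_eq _ _ _ (HA 0)). intro x. split.
      + intro Ax. exists 0. auto.
      + intros [i [Hi Ai]]. replace 0 with i by lia. exact Ai.
    - apply (sig_eq _ _ _ (Dcup _ _ IH (HA (S m)))). intro x. split.
      + intros [[i [Hi Ai]] | Ax]; [exists i | exists (S m)]; split; auto; lia.
      + intros [i [Hi Ai]]. destruct (classic (i = S m)) as [-> | Hne]; [now right |].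
        left. exists i. split; [lia | exact Ai]. }
  apply (sig_eq _ _ _ (Dincr U HU (fun m x '(ex_intro _ i (conj Hi Ai)) =>
                                     ex_intro _ i (conj (le_S _ _ Hi) Ai)))).
  intro x. split.
  - intros [m [i [_ Ai]]]. now exists i.
  - intros [i Ai]. exists i, i. auto.
Qed.

Section PiLambda.
Context {X : Type} (E : (X -> Prop) -> Prop) (HEcap : cap_stable E).

Definition dynkin_gen (A : X -> Prop) : Prop :=
  forall D, is_dynkin D -> (forall B, E B -> D B) -> D A.

Lemma dynkin_gen_dynkin : is_dynkin dynkin_gen.
Proof.
  split; [| split].
  - intros D HD _. apply HD.
  - intros A B HA HB HBA D HD HED. apply HD; [apply HA | apply HB | ]; assumption.
  - intros A HA Hinc D HD HED. apply HD; [| exact Hinc]. intro n. apply HA; assumption.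
Qed.

Lemma dynkin_gen_base (B : X -> Prop) : E B -> dynkin_gen B.
Proof. intros HB D _ HED. exact (HED B HB). Qed.

Lemma dynkin_gen_trace (C : X -> Prop) :
  dynkin_gen C -> is_dynkin (fun A => dynkin_gen (fun x => A x /\ C x)).
Proof.
  intro HC. destruct dynkin_gen_dynkin as [_ [Ddiff Dincr]]. split; [| split].
  - apply (sig_eq _ _ _ HC). tauto.
  - intros A B HA HB HBA.
    apply (sig_eq _ _ _ (Ddiff _ _ HA HB (fun x '(conj Bx Cx) => conj (HBA x Bx) Cx))).
    intro x. specialize (HBA x). tauto.
  - intros A HA Hinc.
    apply (sig_eq _ _ _ (Dincr (fun n x => A n x /\ C x) HA
                           (fun n x '(conj Ax Cx) => conj (Hinc n x Ax) Cx))).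
    intro x. split; [intros [n [Ax Cx]] | intros [[n Ax] Cx]]; eauto.
Qed.

(* The generated Dynkin system is ∩-stable: first against E, then in general. *)
Lemma dynkin_gen_cap (A C : X -> Prop) :
  dynkin_gen A -> dynkin_gen C -> dynkin_gen (fun x => A x /\ C x).
Proof.
  assert (HcapE : forall A C, E C -> dynkin_gen A -> dynkin_gen (fun x => A x /\ C x)).
  { intros A' C' HC HA. apply (HA (fun B => dynkin_gen (fun x => B x /\ C' x))).
    - apply dynkin_gen_trace, dynkin_gen_base, HC.
    - intros B HB. apply dynkin_gen_base, HEcap; assumption. }
  intros HA HC. apply (HA (fun B => dynkin_gen (fun x => B x /\ C x))).
  - apply dynkin_gen_trace, HC.
  - intros B HB. apply (sig_eq _ _ _ (HcapE C B HB HC)). tauto.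
Qed.

Theorem pi_lambda (D : (X -> Prop) -> Prop) :
  is_dynkin D -> (forall B, E B -> D B) -> forall A, sigma_gen E A -> D A.
Proof.
  intros HD HED A HA.
  apply (HA dynkin_gen (dynkin_cap_sigma_field _ dynkin_gen_dynkin dynkin_gen_cap)
            dynkin_gen_base); assumption.
Qed.
End PiLambda.

Section CountingFunctions.
Variables (X : Type) (F E : (X -> Prop) -> Prop).

Definition count_measurable (A : X -> Prop) : Prop :=
  measurable_onat (@CF_sigma X F E) (@N_F X F A).

Lemma CF_sigma_field : is_sigma_field (@CF_sigma X F E).
Proof. apply sigma_gen_sigma_field. Qed.

Lemma count_measurable_generator (A : X -> Prop) : E A -> count_measurable A.
Proof. intros HA B. unfold CF_sigma. apply sigma_gen_base. exists A, B. split; [exact HA | tauto]. Qed.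

Lemma count_measurable_ext (A A' : X -> Prop) :
  (forall x, A x <-> A' x) -> count_measurable A -> count_measurable A'.
Proof. intro H. now rewrite (set_ext _ _ H). Qed.

Lemma count_measurable_empty : count_measurable (fun _ => False).
Proof.
  assert (Hzero : @N_F X F (fun _ => False) = fun _ => Some 0).
  { apply functional_extensionality. intro M. apply ncard_eq.
    exists []. simpl. split; [constructor | split; [tauto | reflexivity]]. }
  unfold count_measurable. rewrite Hzero. apply measurable_const, CF_sigma_field.
Qed.

(* Counting is additive on disjoint sets. *)
Lemma count_measurable_union (A B : X -> Prop) :
  (forall x, A x -> B x -> False) ->
  count_measurable A -> count_measurable B -> count_measurable (fun x => A x \/ B x).
Proof.
  intros Hdisj HA HB.
  assert (Hadd : @N_F X F (fun x => A x \/ B x) = fun M => oadd (@N_F X F A M) (@N_F X F B M)).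
  { apply functional_extensionality. intro M. unfold N_F.
    rewrite <- ncard_disjoint_union by (intros x [_ Ax] [_ Bx]; exact (Hdisj x Ax Bx)).
    apply ncard_ext. tauto. }
  unfold count_measurable. rewrite Hadd.
  exact (measurable_combine _ CF_sigma_field oadd _ _ HA HB).
Qed.

(* Inside a set C ∈ F every M has finitely many points, so counts subtract. *)
Lemma count_measurable_diff (C A B : X -> Prop) :
  F C -> (forall x, A x -> C x) -> (forall x, B x -> A x) ->
  count_measurable A -> count_measurable B -> count_measurable (fun x => A x /\ ~ B x).
Proof.
  intros HC HAC HBA HA HB.
  assert (Hsub : @N_F X F (fun x => A x /\ ~ B x) = fun M => osub (@N_F X F A M) (@N_F X F B M)).
  { apply functional_extensionality. intro M. unfold N_F.
    rewrite <- ncard_diff.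
    - apply ncard_ext. tauto.
    - intros x [Mx Bx]. exact (conj Mx (HBA x Bx)).
    - apply (finite_subset (fun x => proj1_sig M x /\ C x)).
      + intros x [Mx Ax]. exact (conj Mx (HAC x Ax)).
      + exact (proj2 (proj2_sig M) C HC). }
  unfold count_measurable. rewrite Hsub.
  exact (measurable_combine _ CF_sigma_field osub _ _ HA HB).
Qed.

(* Counts of an increasing union are eventual counts of its members. *)
Lemma count_measurable_increasing (A : nat -> X -> Prop) :
  increasing A -> (forall m, count_measurable (A m)) ->
  count_measurable (fun x => exists m, A m x).
Proof.
  intros Hinc HA. apply (measurable_eventual _ CF_sigma_field (fun m => @N_F X F (A m))); [exact HA |].
  intros M k. unfold N_F.
  rewrite (ncard_ext _ (fun x => exists m, proj1_sig M x /\ A m x)) by firstorder.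
  apply ncard_increasing_union. intros m x [Mx Ax]. exact (conj Mx (Hinc m x Ax)).
Qed.

Lemma trace_dynkin (C : X -> Prop) :
  E C -> F C -> is_dynkin (fun A => count_measurable (fun x => A x /\ C x)).
Proof.
  intros HCE HCF. split; [| split].
  - apply (count_measurable_ext C); [tauto | apply count_measurable_generator, HCE].
  - intros A B HA HB HBA.
    apply (count_measurable_ext (fun x => (A x /\ C x) /\ ~ (B x /\ C x))).
    { intro x. specialize (HBA x). tauto. }
    apply (count_measurable_diff C); [exact HCF | tauto | | exact HA | exact HB].
    intros x [Bx Cx]. exact (conj (HBA x Bx) Cx).
  - intros A HA Hinc.
    apply (count_measurable_ext (fun x => exists n, A n x /\ C x)); [firstorder |].
    apply count_measurable_increasing; [| exact HA].
    intros n x [Ax Cx]. exact (conj (Hinc n x Ax) Cx).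
Qed.

Hypothesis HEcap : cap_stable E.

Lemma count_measurable_trace (C A : X -> Prop) :
  E C -> F C -> sigma_gen E A -> count_measurable (fun x => A x /\ C x).
Proof.
  intros HCE HCF. apply (pi_lambda E HEcap (fun A => count_measurable (fun x => A x /\ C x))).
  - apply trace_dynkin; assumption.
  - intros B HB. apply count_measurable_generator, HEcap; assumption.
Qed.

Variables (En : nat -> X -> Prop).
Hypotheses (HEnE : forall n, E (En n)) (HEnF : forall n, F (En n))
  (Hcover : forall x, exists n, En n x).

Fixpoint cover_upto (m : nat) : X -> Prop :=
  match m with
  | 0 => fun _ => False
  | S m => fun x => cover_upto m x \/ En m x
  end.

Lemma cover_upto_measurable (m : nat) : sigma_gen E (cover_upto m).
Proof.
  induction m as [| m IH]; simpl.
  - apply sig_empty, sigma_gen_sigma_field.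
  - apply (sig_eq _ _ _ (sig_union _ (sigma_gen_sigma_field E)
             (fun n x => match n with 0 => cover_upto m x | _ => En m x end)
             (fun n => match n with 0 => IH | _ => sigma_gen_base E _ (HEnE m) end))).
    intro x. split.
    + intros [[| n] Hx]; tauto.
    + intros [Hx | Hx]; [exists 0 | exists 1]; exact Hx.
Qed.

(* A ∩ (E_0 ∪ … ∪ E_{m-1}) is the disjoint union of the traces of A \ cover_upto k on E_k. *)
Lemma count_measurable_upto (A : X -> Prop) (m : nat) :
  sigma_gen E A -> count_measurable (fun x => A x /\ cover_upto m x).
Proof.
  intro HA. induction m as [| m IH]; simpl.
  - apply (count_measurable_ext (fun _ => False)); [tauto | exact count_measurable_empty].
  - apply (count_measurable_ext (fun x => (A x /\ cover_upto m x) \/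
                                          ((A x /\ ~ cover_upto m x) /\ En m x))).
    { intro x. destruct (classic (cover_upto m x)); tauto. }
    apply count_measurable_union; [tauto | exact IH |].
    apply count_measurable_trace; auto.
    apply sig_inter; [apply sigma_gen_sigma_field | exact HA |].
    apply sig_compl; [apply sigma_gen_sigma_field | apply cover_upto_measurable].
Qed.

Lemma count_measurable_sigma (A : X -> Prop) : sigma_gen E A -> count_measurable A.
Proof.
  intro HA.
  apply (count_measurable_ext (fun x => exists m, A x /\ cover_upto m x)).
  { intro x. split; [intros [m [Ax _]]; exact Ax |].
    intro Ax. destruct (Hcover x) as [n Hn]. exists (S n). simpl. tauto. }
  apply count_measurable_increasing.
  - intros m x [Ax Hx]. simpl. tauto.
  - intro m. apply count_measurable_upto, HA.
Qed.
End CountingFunctions.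

Theorem theorem4p1 (S : Type) (SS : (S -> Prop) -> Prop)
  (F : (S -> Prop) -> Prop) (E : (S -> Prop) -> Prop)
  (HSS : is_sigma_field SS)
  (HEcap : cap_stable E)
  (HEgen : forall A, sigma_gen E A <-> SS A)
  (En : nat -> S -> Prop)
  (HEnE : forall n, E (En n))
  (HEnF : forall n, F (En n))
  (Hcover : forall x, exists n, En n x) :
  forall Z : CF F -> Prop, @CF_sigma S F E Z <-> @CF_sigma S F SS Z.
Proof.
  intro Z. split.
  - (* E ⊆ SS, so every generator on the left is a generator on the right *)
    apply sigma_gen_mono. intros W [A [B [HA HW]]].
    exists A, B. split; [apply (proj1 (HEgen A)), sigma_gen_base, HA | exact HW].
  - (* every generator on the right is measurable for the left σ-field *)
    intro HZ. apply HZ; [apply CF_sigma_field |].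
    intros W [A [B [HA HW]]].
    apply (sig_eq _ _ _ (count_measurable_sigma S F E HEcap En HEnE HEnF Hcover A
                           (proj2 (HEgen A) HA) B)).
    intro M. symmetry. apply HW.
Qed.
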